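(* Let $f:\Gamma_+\to\mathbb{R}$ be a smooth function which is homogeneous of degree one. Then $f\in\mathcal{C}_n$ if and only if the following hold everywhere on $\Gamma_+$: (1) $\dot f^i=\frac{\partial f}{\partial x_i}>0$ for each $i$; (2) the matrix $\ddot f^{ij}=\frac{\partial^2 f}{\partial x_i\partial x_j}$ is non-positive (negative semidefinite); (3) the matrix $\ddot f^{ij}+2\frac{\dot f^i}{x_i}\delta_{ij}$ is non-negative (positive semidefinite).
   Context: $\Gamma_+=\{x\in\mathbb{R}^n: x_i>0\ \forall i\}$. $\mathcal{C}_n$ is the class of functions $f:\Gamma_+\to\mathbb{R}$ which are $C^\infty$, homogeneous of degree one ($f(cx)=cf(x)$ for $c>0$), strictly monotone increasing ($\partial f/\partial x_i>0$ for each $i$), concave, and inverse-concave, meaning that $f^*(x_1,\dots,x_n)=-f(x_1^{-1},\dots,x_n^{-1})$ is concave on $\Gamma_+$. *)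

From HB Require Import structures.
From mathcomp Require Import all_boot all_order all_algebra.
From mathcomp Require Import all_classical all_reals all_analysis.
Set Implicit Arguments. Unset Strict Implicit. Unset Printing Implicit Defensive.
Import Order.TTheory GRing.Theory Num.Theory.
Import numFieldNormedType.Exports.
Local Open Scope ring_scope.
Local Open Scope classical_set_scope.

Section Defs.
Variables (R : realType) (n : nat).
Notation V := 'rV[R]_n.

Definition Gamma_plus : set V := [set x | forall i : 'I_n, 0 < x 0 i].

Definition ebasis (i : 'I_n) : V := delta_mx 0 i.

Definition pd (i : 'I_n) (f : V -> R) : V -> R := 'D_(ebasis i) f.

Definition iter_deriv (vs : seq V) (f : V -> R) : V -> R :=
  foldr (fun v g => 'D_v g) f vs.

Definition smooth_on (D : set V) (f : V -> R) : Prop :=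
  forall (vs : seq V) (x : V), D x ->
    {for x, continuous (iter_deriv vs f)} /\
    forall v : V, derivable (iter_deriv vs f) x v.

Definition homogeneous1 (f : V -> R) : Prop :=
  forall (x : V) (c : R), Gamma_plus x -> 0 < c -> f (c *: x) = c * f x.

Definition strictly_increasing (f : V -> R) : Prop :=
  forall x, Gamma_plus x -> forall i : 'I_n, 0 < pd i f x.

Definition concave_on (D : set V) (f : V -> R) : Prop :=
  forall (x y : V) (t : R), D x -> D y -> 0 <= t -> t <= 1 ->
    (1 - t) * f x + t * f y <= f ((1 - t) *: x + t *: y).

Definition vinv (x : V) : V := \row_i (x 0 i)^-1.

Definition fstar (f : V -> R) : V -> R := fun x => - f (vinv x).

Definition inverse_concave (f : V -> R) : Prop :=
  concave_on Gamma_plus (fstar f).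

Definition class_C (f : V -> R) : Prop :=
  [/\ smooth_on Gamma_plus f, homogeneous1 f, strictly_increasing f,
      concave_on Gamma_plus f & inverse_concave f].

Definition hessian (f : V -> R) (x : V) : 'M[R]_n :=
  \matrix_(i, j) pd i (pd j f) x.

Definition nonpos_mx (A : 'M[R]_n) : Prop :=
  forall v : V, (v *m A *m v^T) 0 0 <= 0.
Definition nonneg_mx (A : 'M[R]_n) : Prop :=
  forall v : V, 0 <= (v *m A *m v^T) 0 0.

End Defs.

From HB Require Import structures.
From mathcomp Require Import all_boot all_order all_algebra.
From mathcomp Require Import all_classical all_reals all_analysis.
From mathcomp Require Import ring lra.
Set Implicit Arguments. Unset Strict Implicit. Unset Printing Implicit Defensive.
Import Order.TTheory GRing.Theory Num.Theory.
Import numFieldNormedType.Exports.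
Local Open Scope ring_scope.
Local Open Scope classical_set_scope.

(* A C^2 function g on an open convex set is concave iff every second
   directional derivative D_v D_v g is nonpositive: restrict g to lines, and use
   the three-chord lemma in one direction and the second-derivative test in the
   other.  For f, D_v D_v f(x) is the Hessian form v H(x) v^T.  For
   f^*(y) = -f(1/y) the chain rule gives
     D_w D_w f^*(y) = - u (H(x) + diag(2 f_i(x) / x_i)) u^T,
   with x = 1/y and u_i = w_i / y_i^2; as w |-> u is a bijection, concavity of
   f^* is exactly condition (3).  Smoothness is only used through C^2
   regularity, via "continuous partial derivatives imply differentiability". *)

Section ConcaveReal.
Variable R : realType.
Implicit Types (phi : R -> R) (a b c d s t u v w : R).

Definition slope phi a b := (phi b - phi a) / (b - a).

Lemma slopeC phi a b : slope phi a b = slope phi b a.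
Proof. by rewrite /slope -opprB -[b - a]opprB invrN mulrNN. Qed.

Lemma quotient_slope phi a :
  (fun h : R => h^-1 *: ((phi \o shift a) (h *: 1) - phi a)) =
  (fun h => slope phi a (h + a)).
Proof. by apply/funext => h; rewrite /slope /= [h *: 1]mulr1 addrK mulrC. Qed.

Lemma derive1_ge_slope phi a c : derivable phi a 1 ->
  (\forall h \near 0^', c <= slope phi a (h + a)) -> c <= 'D_1 phi a.
Proof. by rewrite /derivable /derive quotient_slope; exact: limr_ge. Qed.

Lemma derive1_le_slope phi a c : derivable phi a 1 ->
  (\forall h \near 0^', slope phi a (h + a) <= c) -> 'D_1 phi a <= c.
Proof. by rewrite /derivable /derive quotient_slope; exact: limr_le. Qed.

Definition concave_sym_itv phi d := forall a b t,
  -d < a < d -> -d < b < d -> 0 <= t <= 1 ->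
  (1 - t) * phi a + t * phi b <= phi ((1 - t) * a + t * b).

Lemma concave_three_chords phi d u v w : concave_sym_itv phi d ->
  -d < u -> u < v -> v < w -> w < d ->
  slope phi u w <= slope phi u v /\ slope phi v w <= slope phi u w.
Proof.
move=> phic du uv vw wd.
have wu : 0 < w - u by lra.
pose t := (v - u) / (w - u).
have t01 : 0 <= t <= 1 by rewrite divr_ge0 ?ler_pdivrMr ?mul1r /=; lra.
have vE : (1 - t) * u + t * w = v by rewrite /t; field; rewrite gt_eqF.
have chord : (1 - t) * phi u + t * phi w <= phi v.
  by rewrite -[in leRHS]vE; apply: phic => //; apply/andP; lra.
have {}chord : (w - v) * phi u + (v - u) * phi w <= (w - u) * phi v.
  have -> : (w - v) * phi u + (v - u) * phi w =
            (w - u) * ((1 - t) * phi u + t * phi w) by rewrite /t; field; rewrite gt_eqF.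
  by rewrite ler_pM2l.
have vu : 0 < v - u by lra.
have wv : 0 < w - v by lra.
rewrite /slope ler_pdivrMr // mulrAC ler_pdivlMr // ler_pdivrMr // mulrAC ler_pdivlMr //.
by split; lra.
Qed.

Lemma concave_derive1_ge_slope phi d a b : concave_sym_itv phi d ->
  -d < a -> a < b -> b < d -> derivable phi a 1 -> slope phi a b <= 'D_1 phi a.
Proof.
move=> phic da ab bd dphi; apply: derive1_ge_slope => //; near=> h.
have h0 : h != 0 by near: h; exact: nbhs_dnbhs_neq.
have /ltr_normlP[hb1 hb2] : `|h| < b - a by near: h; apply: dnbhs0_lt; lra.
have /ltr_normlP[hd1 hd2] : `|h| < a + d by near: h; apply: dnbhs0_lt; lra.
move: h0; rewrite neq_lt => /orP[hn|hp].
- have h1 : -d < h + a by lra.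
  have h2 : h + a < a by lra.
  have [Hl Hr] := concave_three_chords phic h1 h2 ab bd.
  by rewrite (slopeC phi a (h + a)); exact: le_trans Hr Hl.
- have h1 : a < h + a by lra.
  have h2 : h + a < b by lra.
  by have [] := concave_three_chords phic da h1 h2 bd.
Unshelve. all: by end_near. Qed.

Lemma concave_derive1_le_slope phi d a b : concave_sym_itv phi d ->
  -d < a -> a < b -> b < d -> derivable phi b 1 -> 'D_1 phi b <= slope phi a b.
Proof.
move=> phic da ab bd dphi; apply: derive1_le_slope => //; near=> h.
have h0 : h != 0 by near: h; exact: nbhs_dnbhs_neq.
have /ltr_normlP[hb1 hb2] : `|h| < b - a by near: h; apply: dnbhs0_lt; lra.
have /ltr_normlP[hd1 hd2] : `|h| < d - b by near: h; apply: dnbhs0_lt; lra.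
move: h0; rewrite neq_lt => /orP[hn|hp].
- have h1 : a < h + b by lra.
  have h2 : h + b < b by lra.
  have [_] := concave_three_chords phic da h1 h2 bd.
  by rewrite slopeC.
- have h1 : b < h + b by lra.
  have h2 : h + b < d by lra.
  have [Hl Hr] := concave_three_chords phic da ab h1 h2.
  exact: le_trans Hr Hl.
Unshelve. all: by end_near. Qed.

Lemma nincr_derive1_le0 phi d : 0 < d -> derivable phi 0 1 ->
  (forall a b, -d < a -> a < b -> b < d -> phi b <= phi a) -> 'D_1 phi 0 <= 0.
Proof.
move=> d0 dphi phi_nincr; apply: derive1_le_slope => //; near=> h.
have h0 : h != 0 by near: h; exact: nbhs_dnbhs_neq.
have /ltr_normlP[hd1 hd2] : `|h| < d by near: h; exact: dnbhs0_lt.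
rewrite /slope !addr0 subr0.
move: h0; rewrite neq_lt => /orP[hn|hp].
- by rewrite ler_ndivrMr // mul0r subr_ge0 phi_nincr //; lra.
- by rewrite ler_pdivrMr // mul0r subr_le0 phi_nincr //; lra.
Unshelve. all: by end_near. Qed.

Lemma concave_derive2_le0 phi d : 0 < d -> concave_sym_itv phi d ->
  (forall s, -d < s < d -> derivable phi s 1) ->
  derivable ('D_1 phi) 0 1 -> 'D_1 ('D_1 phi) 0 <= 0.
Proof.
move=> d0 phic dphi ddphi; apply: (nincr_derive1_le0 d0 ddphi) => a b da ab bd.
apply: (@le_trans _ _ (slope phi a b)).
  by apply: (concave_derive1_le_slope phic) => //; apply: dphi; lra.
by apply: (concave_derive1_ge_slope phic) => //; apply: dphi; lra.
Qed.

Lemma derive1N_near phi s : (\forall u \near s, derivable phi u 1) ->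
  \forall u \near s, 'D_1 (- phi) u = - 'D_1 phi u.
Proof. by apply: filterS => u; exact: deriveN. Qed.

Lemma derive2_le0_concave01 phi :
  (forall s, 0 <= s <= 1 -> derivable phi s 1) ->
  (forall s, 0 < s < 1 -> derivable ('D_1 phi) s 1 /\ 'D_1 ('D_1 phi) s <= 0) ->
  forall t, 0 <= t <= 1 -> (1 - t) * phi 0 + t * phi 1 <= phi t.
Proof.
move=> dphi ddphi t /andP[t0 t1].
have cphi s : 0 <= s <= 1 -> {for s, continuous phi}.
  by move=> /dphi /derivable1_diffP /differentiable_continuous.
have DN s : 0 < s < 1 -> \forall u \near s, 'D_1 (- phi) u = - 'D_1 phi u.
  move=> /andP[s0 s1]; apply: derive1N_near; near=> u; apply: dphi.
  have u0 : 0 < u by near: u; exact: lt_nbhsr.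
  have u1 : u < 1 by near: u; exact: lt_nbhsl.
  by apply/andP; split; apply: ltW.
have t' : 0 <= 1 - t <= 1 by apply/andP; lra.
suff : (- phi) ((1 - t) * 0 + (1 - (1 - t)) * 1) <=
       (1 - t) * (- phi) 0 + (1 - (1 - t)) * (- phi) 1.
  by rewrite opprfctE /= mulr0 add0r mulr1 (_ : 1 - (1 - t) = t); [lra | ring].
have := @second_derivative_convex R (- phi) 0 1 _ _ _ _ _
  (Itv01 (proj1 (andP t')) (proj2 (andP t'))) ler01.
rewrite !convRE /unstable.onem; apply.
- move=> s s01; rewrite (@near_eq_derive R R R _ _ s 1 (DN s s01)) deriveN.
    by rewrite oppr_ge0; case: (ddphi s s01).
  by case: (ddphi s s01).
- by apply: cvg_at_left_filter; apply: cvgN; apply: cphi; lra.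
- by apply: cvg_at_right_filter; apply: cvgN; apply: cphi; lra.
- move=> s; rewrite in_itv /= => /andP[s0 s1].
  by apply/derivableN/dphi; apply/andP; split; apply: ltW.
- move=> s; rewrite in_itv /= => s01.
  apply: (near_eq_derivable _ _ (v := 1) (f := - 'D_1 phi)).
    by near do rewrite (near (DN s s01)) //.
  by apply: derivableN; case: (ddphi s s01).
Unshelve. all: by end_near. Qed.

Lemma MVT_from0 phi b : (forall s, `|s| <= `|b| -> derivable phi s 1) ->
  exists c, `|c| <= `|b| /\ phi b - phi 0 = 'D_1 phi c * b.
Proof.
move=> dphi.
have cont a c : (forall s, a <= s <= c -> `|s| <= `|b|) ->
    {within `[a, c], continuous phi}.
  move=> hs; apply: continuous_in_subspaceT => z; rewrite inE /= in_itv /= => hz.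
  by apply/differentiable_continuous/derivable1_diffP/dphi/hs.
have [b0|b0] := leP 0 b.
- have [||c] := @MVT_segment R phi ('D_1 phi) 0 b b0.
  + move=> z; rewrite in_itv /= => /andP[z0 z1]; apply/derivableP/dphi.
    by rewrite !ger0_norm //; lra.
  + by apply: cont => s /andP[s0 s1]; rewrite !ger0_norm //; lra.
  rewrite in_itv /= => /andP[c0 c1] ->; exists c; rewrite subr0.
  by rewrite !ger0_norm //; split; lra.
- have [||c] := @MVT_segment R phi ('D_1 phi) b 0 (ltW b0).
  + move=> z; rewrite in_itv /= => /andP[z0 z1]; apply/derivableP/dphi.
    by rewrite !ltr0_norm //; lra.
  + by apply: cont => s /andP[s0 s1]; rewrite (ltr0_norm b0) ler_norml; lra.
  rewrite in_itv /= => /andP[c0 c1] h; exists c; split.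
    by rewrite (ltr0_norm b0) ler_norml; lra.
  by rewrite -[LHS]opprB h; ring.
Qed.

End ConcaveReal.

Section RowVectors.
Variables (R : realType) (n : nat).
Notation V := 'rV[R]_n.
Implicit Types (x y z v : V).

Lemma normr_entry_le v i : `|v 0 i| <= `|v|.
Proof.
rewrite [leRHS]/Num.norm /= mx_normrE; apply/bigmax_geP; right => /=.
by exists (0, i).
Qed.

Lemma normr_le_entries v (e : R) : 0 <= e -> (forall i, `|v 0 i| <= e) -> `|v| <= e.
Proof.
move=> e0 ve; rewrite [leLHS]/Num.norm /= mx_normrE; apply: bigmax_le => // -[i j] _ /=.
by rewrite (ord1 i); apply: ve.
Qed.

Lemma open_Gamma_plus : open (@Gamma_plus R n).
Proof.
rewrite openE => x xpos.
apply: (@filter_forall _ _ (fun i (y : V) => 0 < y 0 i) _ (nbhs_filter x)) => i.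
apply/nbhs_ballP; exists (x 0 i) => //= y; rewrite -ball_normE /= => xy.
have := le_lt_trans (normr_entry_le (x - y) i) xy; rewrite !mxE ltr_norml.
by have := xpos i; lra.
Qed.

Lemma Gamma_plus_convex x y (t : R) : Gamma_plus x -> Gamma_plus y -> 0 <= t <= 1 ->
  Gamma_plus ((1 - t) *: x + t *: y).
Proof.
by move=> xpos ypos /andP[t0 t1] i; rewrite !mxE; have := xpos i; have := ypos i; nra.
Qed.

Lemma Gamma_plus_neq0 z : Gamma_plus z -> forall i, z 0 i != 0.
Proof. by move=> zpos i; rewrite gt_eqF. Qed.

Lemma Gamma_plus_vinv z : Gamma_plus z -> Gamma_plus (vinv z).
Proof. by move=> zpos i; rewrite mxE invr_gt0. Qed.

Lemma vinvK : involutive (@vinv R n).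
Proof. by move=> z; apply/rowP => i; rewrite !mxE invrK. Qed.

End RowVectors.

Section LineRestriction.
Variables (R : realType) (n : nat).
Notation V := 'rV[R]_n.
Implicit Types (x y z v : V) (g : V -> R).

Let quotient_line g z v (t : R) :
  (fun h : R => h^-1 *: (((fun s : R => g (s *: v + z)) \o shift t) (h *: 1) - g (t *: v + z)))
  = (fun h : R => h^-1 *: ((g \o shift (t *: v + z)) (h *: v) - g (t *: v + z))).
Proof.
by apply/funext => h /=; rewrite [h *: 1]mulr1 scalerDl addrA.
Qed.

Lemma derive1_line g z v (t : R) :
  'D_1 (fun s : R => g (s *: v + z)) t = 'D_v g (t *: v + z).
Proof. by rewrite /derive quotient_line. Qed.

Lemma derivable1_line g z v (t : R) :
  derivable (fun s : R => g (s *: v + z)) t 1 <-> derivable g (t *: v + z) v.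
Proof. by rewrite /derivable quotient_line. Qed.

Lemma derive1_line_fun g z v :
  'D_1 (fun s : R => g (s *: v + z)) = (fun s : R => 'D_v g (s *: v + z)).
Proof. by apply/funext => s; rewrite derive1_line. Qed.

Variables (D : set V) (g : V -> R).
Hypothesis derivable2_g : forall z v, D z -> derivable g z v /\ derivable ('D_v g) z v.

Lemma concave_on_derive2_le0 : open D -> concave_on D g ->
  forall z v, D z -> 'D_v ('D_v g) z <= 0.
Proof.
move=> Dopen gc z v Dz.
have /nbhs_ballP[r r0 rD] := open_nbhs_nbhs (conj Dopen Dz).
pose d := r / (`|v| + 1).
have d0 : 0 < d by rewrite divr_gt0 // ltr_wpDl.
have lineD (s : R) : -d < s < d -> D (s *: v + z).
  move=> /andP[s1 s2]; apply: rD.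
  rewrite -ball_normE /= opprD addrCA subrr addr0 normrN normrZ.
  have : `|s| * (`|v| + 1) < r by rewrite -ltr_pdivlMr ?ltr_wpDl // ltr_norml s1 s2.
  by have := normr_ge0 s; nra.
have -> : z = 0 *: v + z by rewrite scale0r add0r.
rewrite -derive1_line -derive1_line_fun.
apply: (concave_derive2_le0 d0).
- move=> a b t ad bd t01.
  have -> : ((1 - t) * a + t * b) *: v + z = (1 - t) *: (a *: v + z) + t *: (b *: v + z).
    by rewrite !scalerDr !scalerA scalerDl addrACA -[(1 - t) *: z + _]scalerDl subrK scale1r.
  by case/andP: t01 => t0 t1; apply: gc => //; apply: lineD.
- by move=> s sd; apply/derivable1_line; have [] := derivable2_g v (lineD s sd).
- rewrite derive1_line_fun; apply/(derivable1_line (fun w => 'D_v g w)).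
  by rewrite scale0r add0r; have [] := derivable2_g v Dz.
Qed.

Lemma derive2_le0_concave_on :
  (forall x y (t : R), D x -> D y -> 0 <= t <= 1 -> D ((1 - t) *: x + t *: y)) ->
  (forall z v, D z -> 'D_v ('D_v g) z <= 0) -> concave_on D g.
Proof.
move=> Dconvex g2le0 x y t Dx Dy t0 t1.
have lineE (s : R) : s *: (y - x) + x = (1 - s) *: x + s *: y.
  by apply/rowP => i; rewrite !mxE; ring.
have lineD (s : R) : 0 <= s <= 1 -> D (s *: (y - x) + x).
  by move=> s01; rewrite lineE; apply: Dconvex.
have := @derive2_le0_concave01 _ (fun s : R => g (s *: (y - x) + x)) _ _ t.
rewrite !lineE subr0 subrr !scale0r addr0 add0r !scale1r; apply; last by apply/andP.
- by move=> s s01; apply/derivable1_line; have [] := derivable2_g (y - x) (lineD s s01).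
- move=> s /andP[s0 s1].
  have s01 : 0 <= s <= 1 by rewrite !ltW.
  rewrite derive1_line_fun (derive1_line (fun w => 'D_(y - x) g w)); split.
    apply/(derivable1_line (fun w => 'D_(y - x) g w)).
    by have [] := derivable2_g (y - x) (lineD s s01).
  exact/g2le0/lineD.
Qed.

End LineRestriction.

Section Partials.
Variables (R : realType) (n : nat).
Notation V := 'rV[R]_n.
Implicit Types (x y z v h : V) (g : V -> R).

Definition row_prefix (k : nat) h : V := \row_j (if (j < k)%N then h 0 j else 0).

Lemma row_prefix0 h : row_prefix 0 h = 0.
Proof. by apply/rowP => j; rewrite !mxE. Qed.

Lemma row_prefix_full h : row_prefix n h = h.
Proof. by apply/rowP => j; rewrite !mxE ltn_ord. Qed.

Lemma row_prefixS (i : 'I_n) h : row_prefix i.+1 h = row_prefix i h + h 0 i *: ebasis R i.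
Proof.
apply/rowP => j; rewrite !mxE /= ltnS leq_eqVlt.
have [->|ji] := eqVneq j i; first by rewrite eqxx ltnn mulr1 add0r.
by rewrite (inj_eq val_inj) (negPf ji) mulr0 addr0.
Qed.

Lemma normr_row_prefix_le (i : 'I_n) h (c : R) : `|c| <= `|h 0 i| ->
  `|row_prefix i h + c *: ebasis R i| <= `|h|.
Proof.
move=> ch; apply: normr_le_entries => // j; rewrite !mxE /=.
have [->|ji] := eqVneq j i; first by rewrite ltnn mulr1 add0r (le_trans ch) ?normr_entry_le.
rewrite mulr0 addr0; case: ifP => _; last by rewrite normr0.
exact: normr_entry_le.
Qed.

Lemma coordinate_increment_le g y (i : 'I_n) (b a e : R) :
  (forall c, `|c| <= `|b| -> derivable g (c *: ebasis R i + y) (ebasis R i) /\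
                            `|pd i g (c *: ebasis R i + y) - a| <= e) ->
  `|g (b *: ebasis R i + y) - g y - b * a| <= e * `|b|.
Proof.
move=> gi.
have [c [cb ->]] : exists c, `|c| <= `|b| /\
    g (b *: ebasis R i + y) - g y = 'D_1 (fun s : R => g (s *: ebasis R i + y)) c * b.
  have -> : g y = g (0 *: ebasis R i + y) by rewrite scale0r add0r.
  by apply: MVT_from0 => s sb; apply/derivable1_line; case: (gi s sb).
rewrite derive1_line [b * a]mulrC -mulrBl normrM ler_wpM2r //.
exact: (gi c cb).2.
Qed.

Definition grad_form (a : V) h : R := \sum_i h 0 i * a 0 i.

Lemma grad_form_is_linear (a : V) : linear (grad_form a).
Proof.
move=> k u v; rewrite /grad_form scaler_sumr -big_split; apply: eq_bigr => i _.
by rewrite !mxE mulrDl /GRing.scale /= mulrA.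
Qed.

HB.instance Definition _ (a : V) :=
  GRing.isLinear.Build R V R *:%R (grad_form a) (grad_form_is_linear a).

Lemma grad_form_continuous (a : V) : continuous (grad_form a).
Proof.
move=> y; apply: differentiable_continuous.
rewrite (_ : grad_form a = \sum_i (fun h => h 0 i * a 0 i)); last by rewrite fct_sumE.
apply: differentiable_sum => i; apply: differentiableM => //.
exact: differentiable_coord.
Qed.

Lemma partials_increment_le g x (a : V) (r e : R) :
  (forall y, ball x r y -> forall i, derivable g y (ebasis R i) /\ `|pd i g y - a 0 i| <= e) ->
  forall h, `|h| < r -> `|g (h + x) - g x - grad_form a h| <= n%:R * e * `|h|.
Proof.
move=> ga h hr.
have telescope : g (h + x) - g x - grad_form a h =
    \sum_(i < n) (g (row_prefix i.+1 h + x) - g (row_prefix i h + x) - h 0 i * a 0 i).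
  rewrite sumrB -(big_mkord xpredT
    (fun k => g (row_prefix k.+1 h + x) - g (row_prefix k h + x))).
  by rewrite telescope_sumr // row_prefix_full row_prefix0 add0r.
rewrite telescope; apply: (le_trans (ler_norm_sum _ _ _)).
apply: (@le_trans _ _ (\sum_(i < n) e * `|h|)); last first.
  by rewrite sumr_const card_ord -mulrA mulr_natl.
apply: ler_sum => i _.
have e0 : 0 <= e.
  have r0 : 0 < r by apply: le_lt_trans hr.
  exact: le_trans (normr_ge0 _) (ga x (ballxx x r0) i).2.
rewrite row_prefixS (addrC (row_prefix i h)) -[_ + _ + x]addrA.
apply: le_trans (coordinate_increment_le (a := a 0 i) (e := e) _) _; last first.
  by rewrite ler_wpM2l ?normr_entry_le.
move=> c ch; apply: ga; rewrite -ball_normE /=.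
rewrite (_ : x - _ = - (row_prefix i h + c *: ebasis R i)); last first.
  by apply/rowP => j; rewrite !mxE; ring.
by rewrite normrN (le_lt_trans _ hr) // normr_row_prefix_le.
Qed.

Lemma differentiable_partials g x (r : R) : 0 < r ->
  (forall y, ball x r y -> forall i, derivable g y (ebasis R i)) ->
  (forall i, {for x, continuous (pd i g)}) -> differentiable g x.
Proof.
move=> r0 dg cg.
pose a : V := \row_i pd i g x.
have g_expansion : g \o shift x = cst (g x) + grad_form a +o_ (0 : V) id.
  apply/eqaddoP => eps eps0.
  pose e := eps / (n%:R + 1).
  have e0 : 0 < e by rewrite divr_gt0 // ltr_wpDl.
  have pd_near : \forall y \near x, ball x r y /\ forall i, `|pd i g y - a 0 i| <= e.
    apply: filterI; first exact: nbhsx_ballx.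
    apply: (@filter_forall _ _ (fun i y => `|pd i g y - a 0 i| <= e) _ (nbhs_filter x)) => i.
    move/cvgrPdist_lt: (cg i) => /(_ e e0); apply: filterS => y.
    by rewrite mxE distrC => /ltW.
  have /nbhs_ballP[d d0 dH] := pd_near.
  near=> h.
  have hd : `|h| < d.
    have : ball (0 : V) d h by near: h; apply: nbhsx_ballx.
    by rewrite -ball_normE /= sub0r normrN.
  have -> : (g \o shift x - (cst (g x) + grad_form a)) h =
            g (h + x) - g x - grad_form a h by rewrite /= opprD addrA.
  apply: le_trans (partials_increment_le _ hd) _ => [y /dH[xy pdy] i|].
    by split; [exact: dg | exact: pdy].
  rewrite ler_wpM2r // /e mulrA ler_pdivrMr ?ltr_wpDl //.
  by rewrite mulrDr mulr1 mulrC lerDl ltW.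
have dL := diff_unique (grad_form_continuous (a := a)) g_expansion.
by apply/diff_locallyP; rewrite dL; split => //; exact: grad_form_continuous.
Unshelve. all: by end_near. Qed.

End Partials.

Section DerivativeFormulas.
Variables (R : realType) (n : nat).
Notation V := 'rV[R]_n.
Implicit Types (y z v w : V) (g : V -> R) (D : set V).

Lemma differentiable_open_partials D g : open D ->
  (forall z, D z -> forall v, derivable g z v) ->
  (forall z i, D z -> {for z, continuous (pd i g)}) ->
  forall z, D z -> differentiable g z.
Proof.
move=> Dopen dg cg z Dz.
have /nbhs_ballP[r r0 rD] := open_nbhs_nbhs (conj Dopen Dz).
apply: (differentiable_partials r0); last by move=> i; exact: cg.
by move=> y /rD Dy i; exact: dg.
Qed.

Lemma derive_partials g z v : differentiable g z ->
  'D_v g z = \sum_i v 0 i * pd i g z.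
Proof.
move=> dg; rewrite deriveE // {1}(row_sum_delta v) linear_sum; apply: eq_bigr => i _.
by rewrite linearZ /= -deriveE.
Qed.

Lemma derive_coord z w i : 'D_w (fun t : V => t 0 i) z = w 0 i.
Proof.
apply/lim_near_cst => //=; near=> h.
have h0 : h != 0 by near: h; exact: nbhs_dnbhs_neq.
by rewrite !mxE /GRing.scale /= addrK mulrA mulVf // mul1r.
Unshelve. all: by end_near. Qed.

Lemma derive_inv_coord z w i : z 0 i != 0 ->
  'D_w (fun t : V => (t 0 i)^-1) z = - w 0 i / z 0 i ^+ 2.
Proof.
move=> z0; rewrite deriveV //; last exact/diff_derivable/differentiable_coord.
rewrite (_ : 'D_w _ z = w 0 i); last exact: derive_coord.
by rewrite [_ *: _]mulrC mulrN mulNr.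
Qed.

Lemma differentiable_vinv y : (forall i, y 0 i != 0) -> differentiable (@vinv R n) y.
Proof.
move=> y0.
have -> : @vinv R n = \sum_i (fun z : V => (z 0 i)^-1 *: ebasis R i).
  apply/funext => z; rewrite fct_sumE; apply/rowP => j.
  rewrite !mxE summxE (bigD1 j) //= big1 => [|i /negbTE ij]; last first.
    by rewrite !mxE eq_sym ij mulr0.
  by rewrite !mxE !eqxx mulr1 addr0.
apply: differentiable_sum => i; apply: differentiableZl.
exact: differentiableV (differentiable_coord _ _ _) (y0 i).
Qed.

Lemma derive_vinv y w : (forall i, y 0 i != 0) ->
  'D_w (@vinv R n) y = \row_i (- w 0 i / y 0 i ^+ 2).
Proof.
move=> y0; rewrite derive_mx; last exact/diff_derivable/differentiable_vinv.
apply/rowP => i; rewrite !mxE -derive_inv_coord //.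
by congr ('D_w _ y); apply/funext => t; rewrite mxE.
Qed.

Lemma derive_comp_vinv g y w : (forall i, y 0 i != 0) ->
  differentiable g (vinv y) ->
  'D_w (g \o @vinv R n) y = \sum_i (- w 0 i / y 0 i ^+ 2) * pd i g (vinv y).
Proof.
move=> y0 dg; have dv := differentiable_vinv y0.
rewrite deriveE; last exact: differentiable_comp.
rewrite diff_comp //= -(deriveE w dv) -deriveE // derive_vinv // derive_partials //.
by apply: eq_bigr => i _; rewrite mxE.
Qed.

End DerivativeFormulas.

Lemma quad_formE (R : comPzRingType) n (A : 'M[R]_n) (v : 'rV[R]_n) :
  (v *m A *m v^T) 0 0 = \sum_i \sum_j v 0 i * v 0 j * A i j.
Proof.
rewrite !mxE; under eq_bigr do rewrite !mxE mulr_suml.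
by rewrite exchange_big /=; apply: eq_bigr => i _; apply: eq_bigr => j _; ring.
Qed.

Section SmoothFunction.
Variables (R : realType) (n : nat) (D : set 'rV[R]_n) (f : 'rV[R]_n -> R).
Notation V := 'rV[R]_n.
Implicit Types (z v : V).
Hypotheses (Dopen : open D) (f_smooth : smooth_on D f).

Lemma smooth_derivable z v : D z -> derivable f z v.
Proof. by move=> Dz; exact: (f_smooth [::] Dz).2. Qed.

Lemma smooth_pd_derivable j z v : D z -> derivable (pd j f) z v.
Proof. by move=> Dz; exact: (f_smooth [:: ebasis R j] Dz).2. Qed.

Lemma smooth_differentiable z : D z -> differentiable f z.
Proof.
apply: differentiable_open_partials => // [y v Dy|y i Dy]; first exact: smooth_derivable.
exact: (f_smooth [:: ebasis R i] Dy).1.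
Qed.

Lemma smooth_pd_differentiable j z : D z -> differentiable (pd j f) z.
Proof.
apply: differentiable_open_partials => // [y v Dy|y i Dy]; first exact: smooth_pd_derivable.
exact: (f_smooth [:: ebasis R i; ebasis R j] Dy).1.
Qed.

Lemma derive2_hessian z v : D z ->
  derivable ('D_v f) z v /\ 'D_v ('D_v f) z = (v *m hessian f z *m v^T) 0 0.
Proof.
move=> Dz; pose G := \sum_i (v 0 i \*: pd i f).
have GE : \forall y \near z, G y = 'D_v f y.
  apply: filterS (open_nbhs_nbhs (conj Dopen Dz)) => y Dy.
  by rewrite /G fct_sumE derive_partials //; exact: smooth_differentiable.
have dG i : derivable (v 0 i \*: pd i f) z v.
  exact/derivableZ/smooth_pd_derivable.
split; first exact: near_eq_derivable GE (derivable_sum dG).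
rewrite -(near_eq_derive v GE) derive_sum // quad_formE exchange_big /=.
apply: eq_bigr => i _; rewrite deriveZ; last exact: smooth_pd_derivable.
rewrite derive_partials; last exact: smooth_pd_differentiable.
by rewrite scaler_sumr; apply: eq_bigr => j _; rewrite mxE /GRing.scale /=; ring.
Qed.

Lemma concave_on_hessianP :
  (forall x y (t : R), D x -> D y -> 0 <= t <= 1 -> D ((1 - t) *: x + t *: y)) ->
  concave_on D f <-> forall z, D z -> nonpos_mx (hessian f z).
Proof.
move=> Dconvex.
have f_derivable2 z v : D z -> derivable f z v /\ derivable ('D_v f) z v.
  by move=> Dz; split; [exact: smooth_derivable | exact: (derive2_hessian v Dz).1].
split=> [f_concave z Dz v | f_hessian].
  rewrite -(derive2_hessian v Dz).2.
  exact: concave_on_derive2_le0 f_derivable2 Dopen f_concave z v Dz.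
apply: derive2_le0_concave_on f_derivable2 Dconvex _ => z v Dz.
by rewrite (derive2_hessian v Dz).2; exact: f_hessian.
Qed.

End SmoothFunction.

Definition grad_diag_mx (R : realType) n (f : 'rV[R]_n -> R) (x : 'rV[R]_n) : 'M[R]_n :=
  \matrix_(i, j) (if i == j then 2 * pd i f x / x 0 i else 0).

Lemma quad_form_diag (R : comPzRingType) n (d : 'I_n -> R) (v : 'rV[R]_n) :
  (v *m (\matrix_(i, j) (if i == j then d i else 0)) *m v^T) 0 0 =
  \sum_i v 0 i ^+ 2 * d i.
Proof.
rewrite quad_formE; apply: eq_bigr => i _.
rewrite (bigD1 i) //= big1 ?addr0 => [|j ji]; first by rewrite mxE eqxx.
by rewrite mxE eq_sym (negPf ji) mulr0.
Qed.

Section InverseConcave.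
Variables (R : realType) (n : nat) (f : 'rV[R]_n -> R).
Notation V := 'rV[R]_n.
Implicit Types (y z w : V).
Hypothesis f_smooth : smooth_on (@Gamma_plus R n) f.

Let f_differentiable := smooth_differentiable (@open_Gamma_plus R n) f_smooth.
Let pd_f_differentiable := smooth_pd_differentiable (@open_Gamma_plus R n) f_smooth.
Let inv_coord i : V -> R := fun z => (z 0 i)^-1.
Let weight w i : V -> R := cst (w 0 i) * (inv_coord i * inv_coord i).
Let pd_vinv i : V -> R := pd i f \o @vinv R n.

Let weight_pd_vinvE w i y :
  (weight w i * pd_vinv i) y = w 0 i * ((y 0 i)^-1 * (y 0 i)^-1) * pd i f (vinv y).
Proof. by []. Qed.

Let weightE w i y : weight w i y = w 0 i * ((y 0 i)^-1 * (y 0 i)^-1).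
Proof. by []. Qed.

Let differentiable_f_vinv y : Gamma_plus y -> differentiable (f \o @vinv R n) y.
Proof.
move=> ypos; apply: differentiable_comp; first exact/differentiable_vinv/Gamma_plus_neq0.
by apply: f_differentiable; exact: Gamma_plus_vinv.
Qed.

Let differentiable_weight w i y : Gamma_plus y -> differentiable (weight w i) y.
Proof.
move=> ypos; have dinv : differentiable (inv_coord i) y.
  by apply: differentiableV; [exact: differentiable_coord | exact: Gamma_plus_neq0].
by apply: differentiableM => //; exact: differentiableM.
Qed.

Let differentiable_pd_vinv i y : Gamma_plus y -> differentiable (pd_vinv i) y.
Proof.
move=> ypos; apply: differentiable_comp; first exact/differentiable_vinv/Gamma_plus_neq0.
by apply: pd_f_differentiable; exact: Gamma_plus_vinv.
Qed.

Let fstarE : fstar f = - (f \o @vinv R n).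
Proof. by apply/funext. Qed.

Lemma fstar_derivable y w : Gamma_plus y -> derivable (fstar f) y w.
Proof.
by move=> ypos; rewrite fstarE; exact/derivableN/diff_derivable/differentiable_f_vinv.
Qed.

Let derive_fstar y w : Gamma_plus y ->
  'D_w (fstar f) y = (\sum_i (weight w i * pd_vinv i)) y.
Proof.
move=> ypos; have y0 := Gamma_plus_neq0 ypos.
rewrite fstarE deriveN; last exact/diff_derivable/differentiable_f_vinv.
rewrite derive_comp_vinv //; last by apply: f_differentiable; exact: Gamma_plus_vinv.
rewrite fct_sumE -sumrN; apply: eq_bigr => i _ /=.
by rewrite weight_pd_vinvE; field; exact: y0.
Qed.

Let derive_weight w i y : Gamma_plus y ->
  'D_w (weight w i) y = - 2 * w 0 i ^+ 2 / y 0 i ^+ 3.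
Proof.
move=> ypos; have y0 := Gamma_plus_neq0 ypos i.
have dinv : derivable (inv_coord i) y w.
  by apply/diff_derivable/differentiableV => //; exact: differentiable_coord.
rewrite /weight deriveM; [|exact: derivable_cst|exact: derivableM].
rewrite derive_cst scaler0 addr0 deriveM // /inv_coord derive_inv_coord //.
by rewrite /GRing.scale /=; field.
Qed.

Lemma derive2_fstar_sum y w : Gamma_plus y ->
  derivable ('D_w (fstar f)) y w /\
  'D_w ('D_w (fstar f)) y = \sum_i (w 0 i / y 0 i ^+ 2 *
     (\sum_j (- w 0 j / y 0 j ^+ 2) * pd j (pd i f) (vinv y))
     - 2 * w 0 i ^+ 2 / y 0 i ^+ 3 * pd i f (vinv y)).
Proof.
move=> ypos.
have DE : \forall z \near y, (\sum_i (weight w i * pd_vinv i)) z = 'D_w (fstar f) z.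
  apply: filterS (open_nbhs_nbhs (conj (@open_Gamma_plus R n) ypos)) => z zpos.
  by rewrite derive_fstar.
have dterm i : derivable (weight w i * pd_vinv i) y w.
  by apply: derivableM; apply: diff_derivable;
    [exact: differentiable_weight | exact: differentiable_pd_vinv].
split; first exact: near_eq_derivable DE (derivable_sum dterm).
rewrite -(near_eq_derive w DE) derive_sum //; apply: eq_bigr => i _.
rewrite deriveM; last 2 first.
- exact/diff_derivable/differentiable_weight.
- exact/diff_derivable/differentiable_pd_vinv.
rewrite derive_weight // /pd_vinv derive_comp_vinv //; first last.
- by apply: pd_f_differentiable; exact: Gamma_plus_vinv.
- exact: Gamma_plus_neq0.
have y0 := Gamma_plus_neq0 ypos i.
by rewrite weightE /GRing.scale /=; field.
Qed.

Lemma derive2_fstar y w : Gamma_plus y ->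
  'D_w ('D_w (fstar f)) y =
  - (\row_i (w 0 i / y 0 i ^+ 2) *m (hessian f (vinv y) + grad_diag_mx f (vinv y))
     *m (\row_i (w 0 i / y 0 i ^+ 2))^T) 0 0.
Proof.
move=> ypos; have y0 := Gamma_plus_neq0 ypos.
rewrite (derive2_fstar_sum w ypos).2 mulmxDr mulmxDl mxE quad_formE quad_form_diag.
rewrite exchange_big /= -big_split /= -sumrN; apply: eq_bigr => i _.
rewrite mulr_sumr opprD -sumrN; congr (_ + _).
  by apply: eq_bigr => j _; rewrite !mxE; ring.
by rewrite !mxE; field.
Qed.

Lemma inverse_concave_hessianP : inverse_concave f <->
  forall x, Gamma_plus x -> nonneg_mx (hessian f x + grad_diag_mx f x).
Proof.
have fstar_derivable2 y w :
    Gamma_plus y -> derivable (fstar f) y w /\ derivable ('D_w (fstar f)) y w.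
  by move=> ypos; split; [exact: fstar_derivable | exact: (derive2_fstar_sum w ypos).1].
split=> [f_inv_concave x xpos v | f_hessian].
  have ypos := Gamma_plus_vinv xpos.
  (* w is chosen so that the vector \row_i (w 0 i / y 0 i ^+ 2) of derive2_fstar is v *)
  pose w := \row_i (v 0 i * vinv x 0 i ^+ 2).
  have := concave_on_derive2_le0 fstar_derivable2 (@open_Gamma_plus R n) f_inv_concave w ypos.
  rewrite derive2_fstar // oppr_le0 vinvK.
  have -> // : \row_i (w 0 i / vinv x 0 i ^+ 2) = v.
  apply/rowP => i; rewrite !mxE mulfK // expf_neq0 //.
  by rewrite invr_eq0 (Gamma_plus_neq0 xpos).
apply: derive2_le0_concave_on fstar_derivable2 _ _ => [x y t|y w ypos].
  exact: Gamma_plus_convex.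
by rewrite derive2_fstar // oppr_le0; apply: f_hessian; exact: Gamma_plus_vinv.
Qed.

End InverseConcave.

Theorem theorem2p1 (R : realType) (n : nat) (f : 'rV[R]_n -> R) :
  smooth_on (@Gamma_plus R n) f -> homogeneous1 f ->
  (class_C f <->
   forall x : 'rV[R]_n, Gamma_plus x ->
     [/\ forall i : 'I_n, 0 < pd i f x,
         nonpos_mx (hessian f x) &
         nonneg_mx (hessian f x +
                    \matrix_(i, j) (if i == j then 2 * pd i f x / x 0 i else 0))]).
Proof.
move=> f_smooth f_homogeneous.
have f_concaveP :=
  concave_on_hessianP (@open_Gamma_plus R n) f_smooth (@Gamma_plus_convex R n).
have f_inv_concaveP := inverse_concave_hessianP f_smooth.
split=> [[_ _ f_incr /f_concaveP f_hessian /f_inv_concaveP f_inv_hessian] x xpos | f_cond].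
  by split; [exact: f_incr | exact: f_hessian | exact: f_inv_hessian].
split=> //.
- by move=> x xpos; case: (f_cond x xpos).
- by apply/f_concaveP => x xpos; case: (f_cond x xpos).
- by apply/f_inv_concaveP => x xpos; case: (f_cond x xpos).
Qed.
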